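(* Let $I\unlhd K[x_1,\dots,x_n]$ be a homogeneous ideal, let $w\in\mathbb R^n$, and let $J:=\operatorname{in}_{(-1,w)}(\pi^{-1}I)\unlhd R[t,x]$. Then there exists a weight vector $u\in(\mathbb R_{>0})^{n+1}$ such that $J$ is weighted homogeneous with respect to $u$, with $u$ assigning weights to $(t,x_1,\dots,x_n)$.
   Context: Let $K$ be a complete field with a non-trivial discrete valuation $\nu$ and a uniformizing parameter $p$. Let $\mathcal O_K$ be its ring of integers. Let $R\subseteq\mathcal O_K$ be a dense noetherian subring with $p\in R$. The map $\pi:R[[t]][x]\to\mathcal O_K[x]\subseteq K[x]$ sends $t\mapsto p$, and $\pi^{-1}I$ is the preimage of $I$. For $f=\sum c_{\alpha,\beta}t^\beta x^\alpha\in R[[t]][x]$ and $v\in\mathbb R_{<0}\times\mathbb R^n$, $\operatorname{in}_v(f)\in R[t,x]$ is the sum of the terms with $v\cdot(\beta,\alpha)$ maximal. $\operatorname{in}_v(J)$ is the ideal generated by these. An ideal is weighted homogeneous with respect to $u$ if it is generated by polynomials that are homogeneous with respect to the $u$-weighted degree. *)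

From HB Require Import structures.
From mathcomp Require Import all_boot all_order all_algebra.
From mathcomp Require Import mpoly.
From mathcomp Require Import reals.

Set Implicit Arguments.
Unset Strict Implicit.
Unset Printing Implicit Defensive.

Import Order.TTheory GRing.Theory Num.Theory.
Local Open Scope ring_scope.

Definition ideal_gen (A : comNzRingType) (G : A -> Prop) : A -> Prop :=
  fun a => exists s : seq (A * A),
    (forall x, x \in s -> G x.2) /\ a = \sum_(x <- s) x.1 * x.2.

Definition is_ideal (A : comNzRingType) (I : A -> Prop) : Prop :=
  [/\ I 0, (forall a b, I a -> I b -> I (a + b)) &
      (forall r a, I a -> I (r * a))].

Definition noetherian (A : comNzRingType) : Prop :=
  forall I : A -> Prop, is_ideal I ->
    exists s : seq A, forall a, I a <-> ideal_gen (fun b => b \in s) a.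

(* Discrete valuations.  nu x is meaningful for x != 0 (nu 0 = +oo).   *)

Definition discrete_valuation (K : fieldType) (nu : K -> int) : Prop :=
  (forall x y, x != 0 -> y != 0 -> nu (x * y) = nu x + nu y) /\
  (forall x y, x != 0 -> y != 0 -> x + y != 0 ->
      Order.min (nu x) (nu y) <= nu (x + y)).

Definition nontrivial_valuation (K : fieldType) (nu : K -> int) : Prop :=
  exists x : K, x != 0 /\ nu x != 0.

(* "nu x >= N", with the convention nu 0 = +oo *)
Definition val_ge (K : fieldType) (nu : K -> int) (x : K) (N : int) : Prop :=
  x = 0 \/ N <= nu x.

Definition in_OK (K : fieldType) (nu : K -> int) (x : K) : Prop :=
  val_ge nu x 0.

Definition uniformizer (K : fieldType) (nu : K -> int) (p : K) : Prop :=
  [/\ p != 0, 0 < nu p & forall x, x != 0 -> 0 < nu x -> nu p <= nu x].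

Definition converges (K : fieldType) (nu : K -> int) (a : nat -> K) (l : K) :=
  forall N : int, exists M : nat, forall k, (M <= k)%N -> val_ge nu (a k - l) N.

Definition cauchy (K : fieldType) (nu : K -> int) (a : nat -> K) :=
  forall N : int, exists M : nat, forall k l, (M <= k)%N -> (M <= l)%N ->
    val_ge nu (a k - a l) N.

Definition complete (K : fieldType) (nu : K -> int) : Prop :=
  forall a : nat -> K, cauchy nu a -> exists l, converges nu a l.

Definition dense_in_OK (K : fieldType) (nu : K -> int) (R : comNzRingType)
  (iota : R -> K) : Prop :=
  forall x, in_OK nu x -> forall N : int, exists r : R, val_ge nu (x - iota r) N.

(* R[[t]][x] : f = sum_{a,b} f b a t^b x^a, with finitely many a.      *)

Definition psx_poly (R : comNzRingType) (n : nat) (f : nat -> 'X_{1..n} -> R) :=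
  exists s : seq 'X_{1..n}, forall b a, f b a != 0 -> a \in s.

(* pi f = g  (t |-> p): coefficientwise  sum_b f b a p^b = g_a in K      *)
Definition pi_rel (K : fieldType) (nu : K -> int) (R : comNzRingType)
  (iota : R -> K) (p : K) (n : nat) (f : nat -> 'X_{1..n} -> R)
  (g : {mpoly K[n]}) : Prop :=
  forall a : 'X_{1..n},
    converges nu (fun N => \sum_(b < N) iota (f b a) * p ^+ b) g@_a.

Definition pi_preim (K : fieldType) (nu : K -> int) (R : comNzRingType)
  (iota : R -> K) (p : K) (n : nat) (I : {mpoly K[n]} -> Prop)
  (f : nat -> 'X_{1..n} -> R) : Prop :=
  psx_poly f /\ exists g, I g /\ pi_rel nu iota p f g.

(* the monomial t^b x^a of R[t,x] = R[x_0,...,x_n] with x_0 = t *)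
Definition tmon (n : nat) (b : nat) (a : 'X_{1..n}) : 'X_{1..n.+1} :=
  [multinom (if unlift ord0 i is Some j then a j else b) | i < n.+1].

Section Weights.
Variable rR : realType.

Definition vweight (n : nat) (v0 : rR) (w : 'I_n -> rR) (b : nat) (a : 'X_{1..n}) : rR :=
  v0 * b%:R + \sum_(i < n) w i * (a i)%:R.

Definition initial_form (R : comNzRingType) (n : nat) (v0 : rR) (w : 'I_n -> rR)
  (f : nat -> 'X_{1..n} -> R) (g : {mpoly R[n.+1]}) : Prop :=
  ((forall b a, f b a = 0) /\ g = 0) \/
  exists M : rR,
    [/\ exists b a, f b a != 0 /\ vweight v0 w b a = M,
        forall b a, f b a != 0 -> vweight v0 w b a <= M &
        forall b a, g@_(tmon b a) = if vweight v0 w b a == M then f b a else 0].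

Definition initial_ideal (R : comNzRingType) (n : nat) (v0 : rR) (w : 'I_n -> rR)
  (J : (nat -> 'X_{1..n} -> R) -> Prop) : {mpoly R[n.+1]} -> Prop :=
  ideal_gen (fun g => exists f, J f /\ initial_form v0 w f g).

Definition weighted_homog (R : comNzRingType) (m : nat) (u : 'I_m -> rR)
  (g : {mpoly R[m]}) : Prop :=
  exists d : rR, forall mo, mo \in msupp g -> \sum_(i < m) u i * (mo i)%:R = d.

Definition weighted_homog_ideal (R : comNzRingType) (m : nat) (u : 'I_m -> rR)
  (J : {mpoly R[m]} -> Prop) : Prop :=
  exists G : {mpoly R[m]} -> Prop,
    (forall g, G g -> weighted_homog u g) /\ (forall g, J g <-> ideal_gen G g).

End Weights.

Definition homog_ideal (K : fieldType) (n : nat) (I : {mpoly K[n]} -> Prop) : Prop :=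
  exists G : {mpoly K[n]} -> Prop,
    (forall g, G g -> exists d, g \is d.-homog) /\ (forall g, I g <-> ideal_gen G g).

(* Since I is homogeneous, pi^{-1} I is stable under keeping only the terms of
   a fixed x-degree d.  Hence the x-degree-d part of the initial form of f is
   either 0 or the initial form of the x-degree-d part of f, so in_{(-1,w)} J
   is generated by initial forms that are homogeneous both for the x-degree
   and for the (-1,w)-weight.  Such a polynomial is homogeneous for
   lam * (x-degree) - ((-1,w)-weight), i.e. for u = (1, lam - w_1, ...,
   lam - w_n), which is positive as soon as lam > max |w_i|. *)

From HB Require Import structures.
From mathcomp Require Import all_boot all_order all_algebra.
From mathcomp Require Import mpoly.
From mathcomp Require Import reals.
Import Order.TTheory GRing.Theory Num.Theory.
Local Open Scope ring_scope.

Set Implicit Arguments.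
Unset Strict Implicit.

Section IdealGen.
Variable A : comNzRingType.
Implicit Types (G H : A -> Prop) (a b : A).

Lemma ideal_gen0 G : ideal_gen G 0.
Proof. by exists [::]; rewrite big_nil. Qed.

Lemma ideal_genD G a b : ideal_gen G a -> ideal_gen G b -> ideal_gen G (a + b).
Proof.
move=> [s1 [Gs1 ->]] [s2 [Gs2 ->]]; exists (s1 ++ s2); rewrite big_cat.
by split=> // x; rewrite mem_cat => /orP[/Gs1|/Gs2].
Qed.

Lemma ideal_genMl G r a : ideal_gen G a -> ideal_gen G (r * a).
Proof.
move=> [s [Gs ->]]; exists [seq (r * x.1, x.2) | x <- s]; split.
  by move=> y /mapP[x xs ->]; exact: Gs x xs.
by rewrite big_map mulr_sumr; apply: eq_bigr => x _; rewrite mulrA.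
Qed.

Lemma mem_ideal_gen G a : G a -> ideal_gen G a.
Proof.
move=> Ga; exists [:: (1, a)]; rewrite big_seq1 mul1r.
by split=> // x; rewrite inE => /eqP ->.
Qed.

Lemma ideal_gen_sum G (T : Type) (r : seq T) (P : pred T) (F : T -> A) :
  (forall i, P i -> ideal_gen G (F i)) -> ideal_gen G (\sum_(i <- r | P i) F i).
Proof. by move=> GF; apply: big_ind => //; [exact: ideal_gen0 | exact: ideal_genD]. Qed.

Lemma ideal_gen_sub G H a :
  (forall g, G g -> ideal_gen H g) -> ideal_gen G a -> ideal_gen H a.
Proof.
move=> GH [s [Gs ->]]; rewrite big_seq; apply: ideal_gen_sum => x xs.
by apply/ideal_genMl/GH/Gs.
Qed.

End IdealGen.

Lemma mcoeff_pihomog n (R : comNzRingType) (mf : measure n) d (p : {mpoly R[n]}) m :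
  (pihomog mf d p)@_m = if mf m == d then p@_m else 0.
Proof.
rewrite pihomogE raddf_sum /=.
under eq_bigr do rewrite mcoeffZ mcoeffX.
have [pm|pm] := boolP (m \in msupp p).
  rewrite big_mkcond (bigD1_seq m) ?msupp_uniq //= eqxx mulr1 big1 ?addr0 //.
  by move=> m' /negbTE m'm; case: ifP => // _; rewrite m'm mulr0.
move: (pm); rewrite mcoeff_msupp negbK => /eqP ->; rewrite if_same big1 // => m' _.
case: eqP => [m'm|]; last by rewrite mulr0.
by move: pm; rewrite -m'm mcoeff_msupp negbK => /eqP ->; rewrite mul0r.
Qed.

Lemma pihomog_ideal_gen n (R : comNzRingType) (G : {mpoly R[n]} -> Prop) a d :
  (forall g, G g -> exists e, g \is e.-homog) -> ideal_gen G a ->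
  ideal_gen G (pihomog mdeg d a).
Proof.
move=> homG [s [Gs ->]]; rewrite raddf_sum /= big_seq; apply: ideal_gen_sum => x xs.
have [e he] := homG _ (Gs _ xs).
have -> : pihomog mdeg d (x.1 * x.2) =
    (\sum_(j < msize x.1 | (j + e == d)%N) pihomog mdeg j x.1) * x.2.
  rewrite {1}(pihomog_partitionE (leqnn (msize x.1))) !mulr_suml raddf_sum [RHS]big_mkcond.
  apply: eq_bigr => j _ /=.
  have hj : pihomog mdeg j x.1 * x.2 \is (j + e)%N.-homog by apply/dhomogM/he/pihomogP.
  case: eqP => [<-|/eqP ne]; first by rewrite pihomog_dE.
  by rewrite (pihomog_ne0 ne hj).
exact/ideal_genMl/mem_ideal_gen/Gs.
Qed.

Lemma homog_ideal_pihomog (K : fieldType) n (I : {mpoly K[n]} -> Prop) g d :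
  homog_ideal I -> I g -> I (pihomog mdeg d g).
Proof. by move=> [G [homG IG]] /IG Ig; apply/IG/pihomog_ideal_gen. Qed.

Section TMonomials.
Variable n : nat.
Implicit Types (a : 'X_{1..n}) (m : 'X_{1..n.+1}).

Lemma tmon_ord0 b a : tmon b a ord0 = b.
Proof. by rewrite mnmE unlift_none. Qed.

Lemma tmon_lift b a j : tmon b a (lift ord0 j) = a j.
Proof. by rewrite mnmE liftK. Qed.

Lemma tmon_surj m : exists b a, m = tmon b a.
Proof.
exists (m ord0), [multinom m (lift ord0 i) | i < n]; apply/mnmP => i.
by rewrite mnmE; case: unliftP => [j ->|->] //; rewrite mnmE.
Qed.

Definition xdeg m : nat := (\sum_(i < n) m (lift ord0 i))%N.

Lemma xdeg0 : xdeg 0%MM = 0%N.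
Proof. by rewrite /xdeg big1 // => i _; rewrite mnm0E. Qed.

Lemma xdegD : {morph xdeg : m1 m2 / (m1 + m2)%MM >-> (m1 + m2)%N}.
Proof. by move=> m1 m2; rewrite /xdeg -big_split; apply: eq_bigr => i _; rewrite mnmDE. Qed.

HB.instance Definition _ := isMeasure.Build n.+1 xdeg xdeg0 xdegD.

Lemma xdeg_tmon b a : xdeg (tmon b a) = mdeg a.
Proof. by rewrite /xdeg mdegE; apply: eq_bigr => j _; rewrite tmon_lift. Qed.

Lemma mcoeff_pihomog_tmon (R : comNzRingType) d (g : {mpoly R[n.+1]}) b a :
  (pihomog xdeg d g)@_(tmon b a) = if mdeg a == d then g@_(tmon b a) else 0.
Proof. by rewrite mcoeff_pihomog -(xdeg_tmon b a). Qed.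

End TMonomials.

Arguments xdeg {n} m.

Section XDegreeParts.
Variables (K : fieldType) (nu : K -> int) (R : comNzRingType).
Variables (iota : {rmorphism R -> K}) (p : K) (n : nat).
Implicit Types (f : nat -> 'X_{1..n} -> R) (a : 'X_{1..n}).

Definition xpart d f : nat -> 'X_{1..n} -> R :=
  fun b a => if mdeg a == d then f b a else 0.

Lemma psx_poly_xpart d f : psx_poly f -> psx_poly (xpart d f).
Proof.
move=> [s fs]; exists s => b a; rewrite /xpart.
by case: ifP => _; [exact: fs | rewrite eqxx].
Qed.

Lemma pi_rel_xpart d f g :
  pi_rel nu iota p f g -> pi_rel nu iota p (xpart d f) (pihomog mdeg d g).
Proof.
move=> pifg a N; rewrite mcoeff_pihomog /xpart.
case: (mdeg a == d); first exact: pifg.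
by exists 0%N => k _; left; rewrite subr0 big1 // => b _; rewrite rmorph0 mul0r.
Qed.

Lemma pi_preim_xpart (I : {mpoly K[n]} -> Prop) d f :
  homog_ideal I -> pi_preim nu iota p I f -> pi_preim nu iota p I (xpart d f).
Proof.
move=> homI [fpsx [g [Ig pifg]]]; split; first exact: psx_poly_xpart.
by exists (pihomog mdeg d g); split; [exact: homog_ideal_pihomog | exact: pi_rel_xpart].
Qed.

Variable rR : realType.

Lemma initial_form_xpart (v0 : rR) (w : 'I_n -> rR) d f g :
  initial_form v0 w f g -> pihomog xdeg d g != 0 ->
  initial_form v0 w (xpart d f) (pihomog xdeg d g).
Proof.
case=> [[_ ->]|[M [_ fleM gE]]]; first by rewrite raddf0 eqxx.
move=> gd_neq0; right; exists M.
have gdE b a : (pihomog xdeg d g)@_(tmon b a) =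
    if vweight v0 w b a == M then xpart d f b a else 0.
  by rewrite mcoeff_pihomog_tmon gE /xpart; do 2!case: (_ == _).
split=> // [|b a]; last by rewrite /xpart; case: ifP => _; [exact: fleM | rewrite eqxx].
have := mlead_supp gd_neq0; rewrite mcoeff_msupp.
have [b [a ->]] := tmon_surj (mlead (pihomog xdeg d g)); rewrite gdE.
by case: ifP => [/eqP wM fba|_]; [exists b, a | rewrite eqxx].
Qed.

End XDegreeParts.

Section TWeight.
Variables (rR : realType) (n : nat) (w : 'I_n -> rR).

Let lam : rR := 1 + \sum_(i < n) `|w i|.

Definition tweight : 'I_n.+1 -> rR :=
  fun i => if unlift ord0 i is Some j then lam - w j else 1.

Lemma tweight_gt0 i : 0 < tweight i.
Proof.
rewrite /tweight; case: unliftP => [j _|_]; last exact: ltr01.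
rewrite subr_gt0 /lam; apply: le_lt_trans (ler_norm _) _.
by rewrite ltr_pwDl // (bigD1 j) //= lerDl sumr_ge0.
Qed.

Lemma tweight_tmon b (a : 'X_{1..n}) :
  \sum_(i < n.+1) tweight i * (tmon b a i)%:R = lam * (mdeg a)%:R - vweight (-1) w b a.
Proof.
rewrite big_ord_recl /tweight unlift_none tmon_ord0 mul1r.
under eq_bigr do rewrite liftK tmon_lift mulrBl.
by rewrite sumrB -mulr_sumr mdegE natr_sum /vweight mulN1r opprD opprK addrCA.
Qed.

Lemma initial_form_weighted_homog (R : comNzRingType) f (g : {mpoly R[n.+1]}) d :
  initial_form (-1) w f g -> weighted_homog tweight (pihomog xdeg d g).
Proof.
case=> [[_ ->]|[M [_ _ gE]]]; first by exists 0 => mo; rewrite raddf0 msupp0.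
exists (lam * d%:R - M) => mo; rewrite mcoeff_msupp.
have [b [a ->]] := tmon_surj mo; rewrite mcoeff_pihomog_tmon gE tweight_tmon.
case: ifP => [/eqP ->|_]; last by rewrite eqxx.
by case: ifP => [/eqP ->|_]; rewrite ?eqxx.
Qed.

End TWeight.

Theorem lemma5p2
  (rR : realType)
  (K : fieldType) (nu : K -> int)
  (hval : discrete_valuation nu) (hnt : nontrivial_valuation nu)
  (hcomplete : complete nu)
  (R : comNzRingType) (iota : {rmorphism R -> K})
  (hinj : injective iota) (hOK : forall r, in_OK nu (iota r))
  (hdense : dense_in_OK nu iota) (hnoeth : noetherian R)
  (pR : R) (hunif : uniformizer nu (iota pR))
  (n : nat) (I : {mpoly K[n]} -> Prop) (hI : homog_ideal I)
  (w : 'I_n -> rR) :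
  exists u : 'I_n.+1 -> rR,
    (forall i, 0 < u i) /\
    weighted_homog_ideal u
      (initial_ideal (-1) w (pi_preim nu iota (iota pR) I)).
Proof.
set J := pi_preim nu iota (iota pR) I.
pose gens g := exists f, J f /\ initial_form (-1) w f g.
exists (tweight w); split; first exact: tweight_gt0.
exists (fun g => gens g /\ weighted_homog (tweight w) g); split; first by move=> g [].
move=> g; split; last by apply: ideal_gen_sub => h [gens_h _]; exact: mem_ideal_gen.
apply: ideal_gen_sub => {}g [f [Jf inf]].
rewrite (@pihomog_partitionE _ _ xdeg _ g (leqnn _)).
apply: ideal_gen_sum => d _.
have [->|gd_neq0] := eqVneq (pihomog xdeg d g) 0; first exact: ideal_gen0.
apply: mem_ideal_gen; split; last exact: initial_form_weighted_homog inf.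
by exists (xpart d f); split; [exact: pi_preim_xpart | exact: initial_form_xpart].
Qed.
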